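(* Let $q\in\Bbbk^\times$. (1) The linear map $\phi:D(q)\to D(q^{-1})$ with $\phi(e_1)=e_1$, $\phi(e_2)=e_2$, $\phi(a)=qa+(q-1)c$, $\phi(b)=qb$, $\phi(c)=c$, $\phi(d)=(q-1)b+d$ extends to an isomorphism. (2) The linear map $\psi:D(q)\to D(q)$ with $\psi(e_1)=e_2$, $\psi(e_2)=e_1$, $\psi(a)=qd$, $\psi(b)=a+c$, $\psi(c)=b$, $\psi(d)=a$ extends to an isomorphism.
   Context: $\Bbbk$ is an algebraically closed field of characteristic zero. Paths are written left to right. Let $Q$ be the quiver with vertices $e_1,e_2$, arrows $a,c:e_1\to e_2$ and $b,d:e_2\to e_1$; $D(q)=\Bbbk Q/(ab-(a+c)d,\ ba-q\,dc)$. *)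

From HB Require Import structures.
From mathcomp Require Import all_boot all_order all_algebra.
Set Implicit Arguments. Unset Strict Implicit. Unset Printing Implicit Defensive.
Import GRing.Theory.
Local Open Scope ring_scope.

Record gens (K : fieldType) (A : algType K) := Gens {
  ge1 : A; ge2 : A; ga : A; gb : A; gc : A; gd : A }.

Definition is_alg_hom (K : fieldType) (A B : algType K) (f : A -> B) : Prop :=
  [/\ forall (k : K) (x y : A), f (k *: x + y) = k *: f x + f y,
      forall x y : A, f (x * y) = f x * f y
    & f 1 = 1].

Definition is_alg_iso (K : fieldType) (A B : algType K) (f : A -> B) : Prop :=
  is_alg_hom f /\ bijective f.

(* The defining relations of D(q) = kQ/(ab-(a+c)d, ba-q dc), where Q has
   vertices e1,e2, arrows a,c : e1 -> e2, b,d : e2 -> e1, paths composed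
   left to right.  The first group is the standard presentation of the
   path algebra kQ (orthogonal idempotents summing to 1, each arrow
   alpha : i -> j satisfies e_i alpha = alpha = alpha e_j). *)
Definition Dq_rels (K : fieldType) (A : algType K) (q : K) (g : gens A) : Prop :=
  let: Gens e1 e2 a b c d := g in
  [/\ [/\ e1 * e1 = e1, e2 * e2 = e2, e1 * e2 = 0, e2 * e1 = 0 & e1 + e2 = 1],
      [/\ e1 * a = a, a * e2 = a, e1 * c = c & c * e2 = c],
      [/\ e2 * b = b, b * e1 = b, e2 * d = d & d * e1 = d]
    & a * b = (a + c) * d /\ b * a = q *: (d * c)].

Definition is_Dq (K : fieldType) (A : algType K) (q : K) (g : gens A) : Prop :=
  Dq_rels q g /\
  forall (B : algType K) (h : gens B), Dq_rels q h ->
    (exists f : A -> B, is_alg_hom f /\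
        f (ge1 g) = ge1 h /\ f (ge2 g) = ge2 h /\ f (ga g) = ga h /\
        f (gb g) = gb h /\ f (gc g) = gc h /\ f (gd g) = gd h) /\
    (forall f1 f2 : A -> B, is_alg_hom f1 -> is_alg_hom f2 ->
        f1 (ge1 g) = f2 (ge1 g) -> f1 (ge2 g) = f2 (ge2 g) -> f1 (ga g) = f2 (ga g) ->
        f1 (gb g) = f2 (gb g) -> f1 (gc g) = f2 (gc g) -> f1 (gd g) = f2 (gd g) ->
        f1 =1 f2).

(* Each map is a change of generators: the new elements satisfy the defining
   relations of the target, so the universal property yields an algebra map.
   Twisting by q^-1 undoes twisting by q, and the flip is undone by
   e1, e2, a, b, c, d |-> e2, e1, d, c, b - d, q^-1 a; both composites fix the
   generators, hence are identities by uniqueness in the universal property. *)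
From HB Require Import structures.
From mathcomp Require Import all_boot all_order all_algebra.
From mathcomp Require Import ring.
Import GRing.Theory.
Set Implicit Arguments. Unset Strict Implicit.
Local Open Scope ring_scope.

Section AlgHom.
Variables (K : fieldType) (A B : algType K) (f : A -> B).
Hypothesis hf : is_alg_hom f.

Lemma alg_homD x y : f (x + y) = f x + f y.
Proof. by case: hf => lin _ _; have := lin 1 x y; rewrite !scale1r. Qed.

Lemma alg_hom0 : f 0 = 0.
Proof. by apply: (@addrI _ (f 0)); rewrite -alg_homD !addr0. Qed.

Lemma alg_homZ k x : f (k *: x) = k *: f x.
Proof. by case: hf => lin _ _; rewrite -[k *: x]addr0 lin alg_hom0 addr0. Qed.

Lemma alg_homB x y : f (x - y) = f x - f y.
Proof. by rewrite alg_homD -scaleN1r alg_homZ scaleN1r. Qed.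

End AlgHom.

Lemma alg_hom_comp (K : fieldType) (A B C : algType K) (f : A -> B) (k : B -> C) :
  is_alg_hom f -> is_alg_hom k -> is_alg_hom (k \o f).
Proof.
move=> [f_lin f_mul f_1] [k_lin k_mul k_1]; split=> /=.
- by move=> s x y; rewrite f_lin k_lin.
- by move=> x y; rewrite f_mul k_mul.
- by rewrite f_1 k_1.
Qed.

Section ChangeOfGenerators.
Variable K : fieldType.

Definition map_gens (A B : algType K) (f : A -> B) (g : gens A) : gens B :=
  Gens (f (ge1 g)) (f (ge2 g)) (f (ga g)) (f (gb g)) (f (gc g)) (f (gd g)).

Lemma Dq_hom_id (p : K) (A : algType K) (g : gens A) (f : A -> A) :
  is_Dq p g -> is_alg_hom f -> map_gens f g = g -> f =1 id.
Proof.
case=> rels univ hf; case: g rels univ => e1 e2 a b c d rels univ [] /=.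
by move=> f1 f2 fa fb fc fd; apply: (univ _ _ rels).2 => //; split.
Qed.

Lemma Dq_hom_exists (p : K) (A B : algType K) (g : gens A) (h : gens B) :
  is_Dq p g -> Dq_rels p h -> exists2 f : A -> B, is_alg_hom f & map_gens f g = h.
Proof.
case=> _ univ; case: h => e1 e2 a b c d /univ [[f [hf [f1 [f2 [fa [fb [fc fd]]]]]]] _].
by exists f => //; rewrite /map_gens f1 f2 fa fb fc fd.
Qed.

Lemma map_gens_comp (A B C : algType K) (f : A -> B) (k : B -> C) (g : gens A) :
  map_gens (k \o f) g = map_gens k (map_gens f g).
Proof. by []. Qed.

Definition gens_natural (T : forall A : algType K, gens A -> gens A) : Prop :=
  forall (A B : algType K) (f : A -> B) (g : gens A),
    is_alg_hom f -> map_gens f (T A g) = T B (map_gens f g).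

Lemma Dq_iso_change_gens (p p' : K) (A A' : algType K) (g : gens A) (g' : gens A')
    (T S : forall B : algType K, gens B -> gens B) :
  is_Dq p g -> is_Dq p' g' ->
  (forall (B : algType K) (h : gens B), Dq_rels p' h -> Dq_rels p (T B h)) ->
  (forall (B : algType K) (h : gens B), Dq_rels p h -> Dq_rels p' (S B h)) ->
  gens_natural T -> gens_natural S ->
  (forall B : algType K, cancel (S B) (T B)) ->
  (forall B : algType K, cancel (T B) (S B)) ->
  exists2 phi : A -> A', is_alg_iso phi & map_gens phi g = T A' g'.
Proof.
move=> Dg Dg' T_rels S_rels T_nat S_nat ST TS.
have [f hf fg] := Dq_hom_exists Dg (T_rels _ _ Dg'.1).
have [k hk kg'] := Dq_hom_exists Dg' (S_rels _ _ Dg.1).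
exists f => //; split=> //; exists k.
- move=> x; apply: (Dq_hom_id Dg (alg_hom_comp hf hk)).
  by rewrite map_gens_comp fg T_nat // kg' ST.
- move=> x; apply: (Dq_hom_id Dg' (alg_hom_comp hk hf)).
  by rewrite map_gens_comp kg' S_nat // fg TS.
Qed.

End ChangeOfGenerators.

Section Twist.
Variable K : fieldType.

Definition twist_gens (q : K) (A : algType K) (g : gens A) : gens A :=
  Gens (ge1 g) (ge2 g) (q *: ga g + (q - 1) *: gc g) (q *: gb g)
       (gc g) ((q - 1) *: gb g + gd g).

Lemma twist_gens_natural (q : K) : gens_natural (twist_gens q).
Proof.
by move=> A B f [e1 e2 a b c d] hf; rewrite /map_gens /= !(alg_homD hf) !(alg_homZ hf).
Qed.

Lemma twist_gensK (q : K) :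
  q != 0 -> forall A : algType K, cancel (@twist_gens q A) (@twist_gens q^-1 A).
Proof.
move=> q_neq0 A [e1 e2 a b c d]; rewrite /twist_gens /=; congr Gens.
- rewrite scalerDr !scalerA mulVf // scale1r -addrA -scalerDl.
  have -> : q^-1 * (q - 1) + (q^-1 - 1) = 0 by field.
  by rewrite scale0r addr0.
- by rewrite scalerA mulVf // scale1r.
- rewrite scalerA addrA -scalerDl.
  have -> : (q^-1 - 1) * q + (q - 1) = 0 by field.
  by rewrite scale0r add0r.
Qed.

Lemma twist_gensKV (q : K) :
  q != 0 -> forall A : algType K, cancel (@twist_gens q^-1 A) (@twist_gens q A).
Proof. by move=> q_neq0; rewrite -{2}(invrK q); apply: twist_gensK; rewrite invr_eq0. Qed.

Lemma twist_gens_rels (q : K) : q != 0 ->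
  forall (A : algType K) (g : gens A), Dq_rels q^-1 g -> Dq_rels q (twist_gens q g).
Proof.
move=> q_neq0 A [e1 e2 a b c d] /=.
case=> [idem [A1 A2 C1 C2] [B1 B2 D1 D2] [Hab Hba]]; split=> //.
- by split; rewrite ?mulrDr ?mulrDl -?scalerAr -?scalerAl ?A1 ?A2 ?C1 ?C2.
- by split; rewrite ?mulrDr ?mulrDl -?scalerAr -?scalerAl ?B1 ?B2 ?D1 ?D2.
split.
- have -> : q *: a + (q - 1) *: c + c = q *: (a + c).
    by rewrite scalerBl scale1r -addrA subrK -scalerDr.
  rewrite -scalerAl mulrDr -scalerAr -Hab !mulrDl -!scalerAl -!scalerAr.
  by congr (q *: _); rewrite addrAC [(q - 1) *: (a * b)]scalerBl scale1r subrK.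
- rewrite !mulrDr !mulrDl -!scalerAl -!scalerAr !scalerA Hba scalerA.
  rewrite scalerDr scalerA addrC.
  by congr (_ *: _ + _ *: _); field.
Qed.

Lemma twist_gensV_rels (q : K) : q != 0 ->
  forall (A : algType K) (g : gens A), Dq_rels q g -> Dq_rels q^-1 (twist_gens q^-1 g).
Proof. by move=> q_neq0; rewrite -{1}(invrK q); apply: twist_gens_rels; rewrite invr_eq0. Qed.

End Twist.

Section Flip.
Variables (K : fieldType) (q : K).
Hypothesis q_neq0 : q != 0.

Definition flip_gens (A : algType K) (g : gens A) : gens A :=
  Gens (ge2 g) (ge1 g) (q *: gd g) (ga g + gc g) (gb g) (ga g).

Definition unflip_gens (A : algType K) (g : gens A) : gens A :=
  Gens (ge2 g) (ge1 g) (gd g) (gc g) (gb g - gd g) (q^-1 *: ga g).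

Lemma flip_gens_natural : gens_natural flip_gens.
Proof.
by move=> A B f [e1 e2 a b c d] hf; rewrite /map_gens /= !(alg_homD hf) !(alg_homZ hf).
Qed.

Lemma unflip_gens_natural : gens_natural unflip_gens.
Proof.
by move=> A B f [e1 e2 a b c d] hf; rewrite /map_gens /= !(alg_homB hf) !(alg_homZ hf).
Qed.

Lemma flip_gens_rels (A : algType K) (g : gens A) :
  Dq_rels q g -> Dq_rels q (flip_gens g).
Proof.
case: g => e1 e2 a b c d /=.
case=> [[E1 E2 E12 E21 E1E2] [A1 A2 C1 C2] [B1 B2 D1 D2] [Hab Hba]].
split; first by split; rewrite // addrC.
1,2: by split; rewrite ?mulrDr ?mulrDl -?scalerAr -?scalerAl ?A1 ?A2 ?C1 ?C2 ?D1 ?D2 ?B1 ?B2.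
split.
- by rewrite mulrDl -!scalerAl Hba -scalerDr mulrDr.
- by rewrite -scalerAr Hab.
Qed.

Lemma unflip_gens_rels (A : algType K) (g : gens A) :
  Dq_rels q g -> Dq_rels q (unflip_gens g).
Proof.
case: g => e1 e2 a b c d /=.
case=> [[E1 E2 E12 E21 E1E2] [A1 A2 C1 C2] [B1 B2 D1 D2] [Hab Hba]].
split; first by split; rewrite // addrC.
1,2: by split; rewrite ?mulrBr ?mulrBl -?scalerAr -?scalerAl ?A1 ?A2 ?C1 ?C2 ?D1 ?D2 ?B1 ?B2.
split.
- by rewrite addrC subrK -scalerAr Hba scalerA mulVf // scale1r.
- by rewrite -scalerAl scalerA mulfV // scale1r mulrBr Hab mulrDl addrAC subrr add0r.
Qed.

Lemma flip_gensK (A : algType K) : cancel (@flip_gens A) (@unflip_gens A).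
Proof.
by move=> [e1 e2 a b c d]; rewrite /flip_gens /unflip_gens /= addrC addKr scalerA mulVf // scale1r.
Qed.

Lemma unflip_gensK (A : algType K) : cancel (@unflip_gens A) (@flip_gens A).
Proof.
by move=> [e1 e2 a b c d]; rewrite /flip_gens /unflip_gens /= addrC subrK scalerA mulfV // scale1r.
Qed.

End Flip.

Theorem lemma3p8 (K : closedFieldType) (charK0 : [pchar K] =i pred0)
  (q : K) (hq : q != 0)
  (A : algType K) (g : gens A) (hA : is_Dq q g)
  (A' : algType K) (g' : gens A') (hA' : is_Dq q^-1 g') :
  (exists phi : A -> A', is_alg_iso phi /\
     phi (ge1 g) = ge1 g' /\ phi (ge2 g) = ge2 g' /\
     phi (ga g) = q *: ga g' + (q - 1) *: gc g' /\
     phi (gb g) = q *: gb g' /\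
     phi (gc g) = gc g' /\
     phi (gd g) = (q - 1) *: gb g' + gd g')
  /\
  (exists psi : A -> A, is_alg_iso psi /\
     psi (ge1 g) = ge2 g /\ psi (ge2 g) = ge1 g /\
     psi (ga g) = q *: gd g /\
     psi (gb g) = ga g + gc g /\
     psi (gc g) = gb g /\
     psi (gd g) = ga g).
Proof.
split.
- have [phi phi_iso phi_gens] := Dq_iso_change_gens hA hA'
    (twist_gens_rels hq) (twist_gensV_rels hq)
    (twist_gens_natural q) (twist_gens_natural q^-1)
    (twist_gensKV hq) (twist_gensK hq).
  by exists phi; split=> //; case: phi_gens => -> -> -> -> -> ->.
- have [psi psi_iso psi_gens] := Dq_iso_change_gens hA hA
    (@flip_gens_rels K q) (unflip_gens_rels hq)
    (flip_gens_natural q) (unflip_gens_natural q)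
    (unflip_gensK hq) (flip_gensK hq).
  by exists psi; split=> //; case: psi_gens => -> -> -> -> -> ->.
Qed.
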